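(* Let $k$ be a complete non-trivially valued non-Archimedean field and $\Gamma\le\mathrm{PGL}(2,k)$ a finitely generated subgroup that is not strongly irreducible. Then one of the following holds: (1) $\Gamma$ has potential good reduction; (2) $\Gamma$ is conjugate in $\mathrm{PGL}(2,k)$ to a subgroup of the affine group $\{z\mapsto az+b:\ a\in k^\times,\ b\in k\}$; (3) $\Gamma$ is conjugate in $\mathrm{PGL}(2,k)$ to a subgroup of $\{z\mapsto\lambda z^{\pm1}:\ \lambda\in k^\times\}$.
   Context: $\Gamma$ is strongly irreducible if it has no finite orbit in $\mathbb{P}^1(k)$. $\Gamma$ has potential good reduction if there is a finite extension $K/k$ and $h\in\mathrm{PGL}(2,K)$ such that $h\Gamma h^{-1}$ is contained in $\mathrm{PGL}(2,K^\circ)$, the stabilizer of the Gauss point $\sum a_iZ^i\mapsto\max|a_i|$ of the Berkovich line over $K$ ($K^\circ$ the valuation ring). *)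

From HB Require Import structures.
From mathcomp Require Import all_boot all_order all_algebra all_field.
From mathcomp Require Import reals.
Set Implicit Arguments. Unset Strict Implicit. Unset Printing Implicit Defensive.
Import Order.TTheory GRing.Theory Num.Theory.
Local Open Scope ring_scope.

Definition nonarch_abs (R : realType) (F : fieldType) (v : F -> R) : Prop :=
  [/\ forall x, 0 <= v x,
      forall x, v x = 0 -> x = 0,
      v 0 = 0,
      forall x y, v (x * y) = v x * v y
    & forall x y, v (x + y) <= Num.max (v x) (v y)].

Definition nontrivial_abs (R : realType) (F : fieldType) (v : F -> R) : Prop :=
  exists x : F, v x != 0 /\ v x != 1.

Definition complete_abs (R : realType) (F : fieldType) (v : F -> R) : Prop :=
  forall u : nat -> F,
    (forall e : R, 0 < e -> exists N : nat, forall m n : nat,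
        (N <= m)%N -> (N <= n)%N -> v (u m - u n) < e) ->
    exists l : F, forall e : R, 0 < e -> exists N : nat, forall n : nat,
        (N <= n)%N -> v (u n - l) < e.

(* ---------- Subgroups of PGL(2,k) ----------
   A subgroup Gamma <= PGL(2,k) is represented by its full preimage in
   GL(2,k), a predicate on 2x2 matrices.  The subgroup generated by the
   classes of finitely many invertible matrices s has as preimage the
   subgroup of GL(2,k) generated by s and the nonzero scalar matrices. *)
Inductive gen_pgl (k : fieldType) (s : seq 'M[k]_2) : 'M[k]_2 -> Prop :=
| gen_pgl_scalar (c : k) : c != 0 -> gen_pgl s c%:M
| gen_pgl_elt (g : 'M[k]_2) : g \in s -> gen_pgl s g
| gen_pgl_inv (g : 'M[k]_2) : g \in s -> gen_pgl s (invmx g)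
| gen_pgl_mul (a b : 'M[k]_2) : gen_pgl s a -> gen_pgl s b -> gen_pgl s (a *m b).

(* Points of P^1(k) are lines spanned by nonzero column vectors (z,1)^T etc.;
   a matrix g acts by v |-> g v (Moebius action z |-> (az+b)/(cz+d)). *)
Definition has_finite_orbit (k : fieldType) (G : 'M[k]_2 -> Prop) : Prop :=
  exists v : 'cV[k]_2, v != 0 /\
    exists ws : seq 'cV[k]_2,
      forall g, G g -> exists2 w, w \in ws & exists c : k, c != 0 /\ g *m v = c *: w.

Definition strongly_irreducible (k : fieldType) (G : 'M[k]_2 -> Prop) : Prop :=
  ~ has_finite_orbit G.

(* PGL(2,K°) inside PGL(2,K): classes represented by a matrix in GL(2,K°),
   i.e. all entries of absolute value <= 1 and determinant a unit of K°. *)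
Definition in_GL2_integral (R : realType) (K : fieldType) (w : K -> R)
    (M : 'M[K]_2) : Prop :=
  (forall i j, w (M i j) <= 1) /\ w (\det M) = 1.

Definition in_PGL2_integral (R : realType) (K : fieldType) (w : K -> R)
    (M : 'M[K]_2) : Prop :=
  exists c : K, c != 0 /\ in_GL2_integral w (c *: M).

(* Potential good reduction: there are a finite extension K/k, the (unique,
   k being complete) extension w of the absolute value to K, and
   h in PGL(2,K) with h Gamma h^-1 <= PGL(2,K°). *)
Definition potential_good_reduction (R : realType) (k : fieldType) (v : k -> R)
    (G : 'M[k]_2 -> Prop) : Prop :=
  exists (K : fieldExtType k) (w : K -> R),
    [/\ nonarch_abs w,
        (forall a : k, w (a%:A) = v a)
      & exists h : 'M[K]_2, h \in unitmx /\
          forall g, G g ->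
            in_PGL2_integral w (h *m map_mx (fun a : k => a%:A) g *m invmx h)].

(* Affine group {z |-> a z + b}: classes of invertible upper triangular matrices. *)
Definition affine_mx (k : fieldType) (M : 'M[k]_2) : Prop := M 1 0 = 0.

(* {z |-> lambda z^{+-1}}: classes of invertible diagonal or antidiagonal matrices. *)
Definition monomial_mx (k : fieldType) (M : 'M[k]_2) : Prop :=
  (M 0 1 = 0 /\ M 1 0 = 0) \/ (M 0 0 = 0 /\ M 1 1 = 0).

Definition conj_into (k : fieldType) (P : 'M[k]_2 -> Prop) (G : 'M[k]_2 -> Prop) : Prop :=
  exists h : 'M[k]_2, h \in unitmx /\ forall g, G g -> P (h *m g *m invmx h).

(* Let [x] be a point of P^1(k) with finite orbit under Gamma.  If Gamma
   fixes [x], moving [x] to infinity makes Gamma affine.  If the orbit is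
   {[x], [g1 x]}, Gamma permutes these two points and moving them to 0 and
   infinity makes Gamma monomial.  Otherwise the orbit contains three points
   [x], [g1 x], [g2 x]; an element of PGL(2) is determined by their images,
   which lie in the finite orbit, so Gamma is finite.  Over a finite
   extension K in which every |det g| is a square of |K^x|, each g has a
   representative with |det| = 1, unique up to units of K°.  The lattice
   {x | A x is integral for every such representative A} is then stable
   under Gamma; it is a lattice because the meet of two lattices is one
   (Smith normal form over K°), and conjugating it to (K°)^2 gives good
   reduction. *)

From HB Require Import structures.
From mathcomp Require Import all_boot all_order all_algebra all_field.
From mathcomp Require Import reals ring lra.
From Stdlib Require Import Classical.
Set Implicit Arguments. Unset Strict Implicit. Unset Printing Implicit Defensive.
Import Order.TTheory GRing.Theory Num.Theory.
Local Open Scope ring_scope.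

Section NonArchimedeanAbs.
Variables (R : realType) (F : fieldType) (w : F -> R).
Hypothesis Hw : nonarch_abs w.

Lemma nabs_ge0 x : 0 <= w x. Proof. by case: Hw. Qed.
Lemma nabs0 : w 0 = 0. Proof. by case: Hw. Qed.
Lemma nabsM x y : w (x * y) = w x * w y. Proof. by case: Hw. Qed.
Lemma nabsD_max x y : w (x + y) <= Num.max (w x) (w y). Proof. by case: Hw. Qed.

Lemma nabs_eq0 x : (w x == 0) = (x == 0).
Proof.
apply/eqP/eqP => [|->]; last exact: nabs0.
by case: Hw => _ H _ _ _; apply: H.
Qed.

Lemma nabs_gt0 x : (0 < w x) = (x != 0).
Proof. by rewrite lt_def nabs_eq0 nabs_ge0 andbT. Qed.

Lemma nabs1 : w 1 = 1.
Proof.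
have w1_neq0 : w 1 != 0 by rewrite nabs_eq0 oner_eq0.
by apply: (mulfI w1_neq0); rewrite -nabsM !mulr1.
Qed.

Lemma nabsN x : w (- x) = w x.
Proof.
have wN1 : w (-1) = 1.
  have := nabsM (-1) (-1); rewrite mulrNN mulr1 nabs1 => H.
  have := nabs_ge0 (-1); nra.
by rewrite -mulN1r nabsM wN1 mul1r.
Qed.

Lemma nabsV x : w x^-1 = (w x)^-1.
Proof.
have [->|x_neq0] := eqVneq x 0; first by rewrite invr0 nabs0 invr0.
have wx_neq0 : w x != 0 by rewrite nabs_eq0.
by apply: (mulfI wx_neq0); rewrite -nabsM !mulfV // nabs1.
Qed.

Lemma nabsX x n : w (x ^+ n) = w x ^+ n.
Proof. by elim: n => [|n IH]; rewrite ?nabs1 // !exprS nabsM IH. Qed.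

Lemma nabsD_le x y m : w x <= m -> w y <= m -> w (x + y) <= m.
Proof. by move=> hx hy; apply: le_trans (nabsD_max x y) _; rewrite ge_max hx hy. Qed.

Lemma nabsD_eq_max x y : w x != w y -> w (x + y) = Num.max (w x) (w y).
Proof.
wlog lt_xy : x y / w x < w y.
  move=> H; rewrite neq_lt => /orP[] lt; first by rewrite H // lt_eqF.
  by rewrite addrC maxC H // lt_eqF.
move=> _; rewrite max_r ?ltW //; apply/eqP.
rewrite eq_le nabsD_le ?(ltW lt_xy) //=.
have : w y <= Num.max (w (x + y)) (w (- x)).
  by have := nabsD_max (x + y) (- x); rewrite addrC addKr.
rewrite nabsN le_max => /orP[-> //|le_yx].
by move: (lt_le_trans lt_xy le_yx); rewrite ltxx.
Qed.

Lemma nabs_div_le1 x y : w x <= w y -> w (x / y) <= 1.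
Proof.
have [->|y_neq0] := eqVneq y 0; first by rewrite invr0 mulr0 nabs0 ler01.
by rewrite nabsM nabsV ler_pdivrMr ?mul1r ?nabs_gt0.
Qed.

Lemma nabs_mul_le1 x y : w x <= 1 -> w y <= 1 -> w (x * y) <= 1.
Proof. by move=> hx hy; rewrite nabsM -(mulr1 1) ler_pM ?nabs_ge0. Qed.

End NonArchimedeanAbs.

Definition ultra_sum (R : realDomainType) (X P Q : R) :=
  X <= Num.max P Q /\ (P != Q -> X = Num.max P Q).

Lemma nabsD_ultra (R : realType) (F : fieldType) (w : F -> R) x y :
  nonarch_abs w -> ultra_sum (w (x + y)) (w x) (w y).
Proof. by move=> Hw; split; [apply: nabsD_max | apply: nabsD_eq_max]. Qed.

Lemma ultra_sum_pM (R : realDomainType) (s X P Q : R) :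
  0 < s -> ultra_sum X P Q -> ultra_sum (s * X) (s * P) (s * Q).
Proof.
move=> s_gt0 [le_X eq_X]; have s_ge0 := ltW s_gt0.
rewrite /ultra_sum -maxr_pMr // ler_pM2l //; split=> // neq.
by rewrite eq_X //; apply: contraNneq neq => ->.
Qed.

(* With A_i = |a_i| and B_i = sqrt|t| |b_i|, this is the multiplicativity of
   max(|a|, sqrt|t| |b|) on the product (a1 + b1 sqrt t) (a2 + b2 sqrt t). *)
Lemma max_mul_ultra_sum (R : realDomainType) (A1 B1 A2 B2 X Y : R) :
  0 <= A1 -> 0 <= B1 -> 0 <= A2 -> 0 <= B2 -> A1 != B1 -> A2 != B2 ->
  ultra_sum X (A1 * A2) (B1 * B2) -> ultra_sum Y (A1 * B2) (A2 * B1) ->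
  Num.max X Y = Num.max A1 B1 * Num.max A2 B2.
Proof.
move=> a1 b1 a2 b2 + + [hX eX] [hY eY]; rewrite !neq_lt => /orP[] l1 /orP[] l2.
- have P : A1 * A2 < B1 * B2 by nra.
  have -> : X = B1 * B2 by rewrite eX ?(lt_eqF P) // max_r // ltW.
  rewrite max_l; last by apply: le_trans hY _; rewrite ge_max; apply/andP; split; nra.
  by rewrite !max_r ?ltW.
- have P : A1 * B2 < A2 * B1 by nra.
  have -> : Y = A2 * B1 by rewrite eY ?(lt_eqF P) // max_r // ltW.
  rewrite max_r; last by apply: le_trans hX _; rewrite ge_max; apply/andP; split; nra.
  by rewrite max_r ?ltW // max_l ?ltW // mulrC.
- have P : A2 * B1 < A1 * B2 by nra.
  have -> : Y = A1 * B2 by rewrite eY ?(gt_eqF P) // max_l // ltW.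
  rewrite max_r; last by apply: le_trans hX _; rewrite ge_max; apply/andP; split; nra.
  by rewrite max_l ?ltW // max_r ?ltW.
- have P : B1 * B2 < A1 * A2 by nra.
  have -> : X = A1 * A2 by rewrite eX ?(gt_eqF P) // max_l // ltW.
  rewrite max_l; last by apply: le_trans hY _; rewrite ge_max; apply/andP; split; nra.
  by rewrite !max_l ?ltW.
Qed.

Section AdjoinSqrt.
Variables (R : realType) (F : fieldType) (w : F -> R) (t : F).
Hypothesis Hw : nonarch_abs w.
Hypothesis abs_t_nonsquare : forall y : F, w y ^+ 2 != w t.
Variables (L : fieldExtType F) (z : L).
Hypotheses (z2 : z ^+ 2 = t%:A) (dimL : \dim {:L} = 2%N).

Lemma sqrt_notin_base c : z != c%:A.
Proof.
apply/eqP => zc; move: z2; rewrite zc -!in_algE -rmorphXn.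
move=> /(fmorph_inj (in_alg L)) c2t.
by move: (abs_t_nonsquare c); rewrite -(nabsX Hw) c2t eqxx.
Qed.

Let X : 2.-tuple L := [tuple 1; z].

Lemma free_1_sqrt : free X.
Proof.
rewrite /= free_cons seq1_free span_seq1; apply/andP; split; last first.
  by move: (sqrt_notin_base 0); rewrite scale0r.
apply/negP => /vlineP [c c1].
have c_neq0 : c != 0.
  by apply/eqP => c0; move: c1; rewrite c0 scale0r => /eqP; rewrite oner_eq0.
move: (sqrt_notin_base c^-1); rewrite c1 scalerA mulVf // scale1r.
by rewrite eqxx.
Qed.

Let cf0 (y : L) : F := coord X ord0 y.
Let cf1 (y : L) : F := coord X (lift ord0 ord0) y.

Lemma decomp_1_sqrt y : y = cf0 y *: 1 + cf1 y *: z.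
Proof.
have spanX : span X = fullv.
  by apply: span_basis; rewrite basisEfree free_1_sqrt subvf dimL /=.
have := coord_span (X := X) (v := y); rewrite spanX memvf => /(_ isT).
by rewrite !big_ord_recl big_ord0 addr0.
Qed.

Lemma coord_1_sqrt a b : cf0 (a *: 1 + b *: z) = a /\ cf1 (a *: 1 + b *: z) = b.
Proof.
have := coord_free ord0 ord0 free_1_sqrt.
have := coord_free ord0 (lift ord0 ord0) free_1_sqrt.
have := coord_free (lift ord0 ord0) ord0 free_1_sqrt.
have := coord_free (lift ord0 ord0) (lift ord0 ord0) free_1_sqrt.
rewrite /cf0 /cf1 !linearD !linearZ /= => -> -> -> ->.
by rewrite !mulr1 !mulr0 addr0 add0r.
Qed.

Lemma mul_1_sqrt a1 b1 a2 b2 :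
  (a1 *: 1 + b1 *: z) * (a2 *: 1 + b2 *: z)
  = (a1 * a2 + t * (b1 * b2)) *: 1 + (a1 * b2 + a2 * b1) *: z.
Proof.
rewrite -!(mulr_algl _ z) -!in_algE !rmorphD !rmorphM /= -z2.
set A1 := a1%:A; set A2 := a2%:A; set B1 := b1%:A; set B2 := b2%:A.
ring.
Qed.

Let s := Num.sqrt (w t).

Let s_gt0 : 0 < s.
Proof.
rewrite sqrtr_gt0 (nabs_gt0 Hw); apply: contraTneq (abs_t_nonsquare 0) => ->.
by rewrite (nabs0 Hw) expr0n eqxx.
Qed.

(* Multiplicative because |t| is not the square of a value of w, so the two
   terms of the max never tie on a nonzero element (coord_abs_neq). *)
Definition sqrt_ext_abs (y : L) : R := Num.max (w (cf0 y)) (s * w (cf1 y)).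

Lemma sqrt_ext_abs0 : sqrt_ext_abs 0 = 0.
Proof. by rewrite /sqrt_ext_abs /cf0 /cf1 !linear0 (nabs0 Hw) mulr0 maxxx. Qed.

Lemma coord_abs_neq y : y != 0 -> w (cf0 y) != s * w (cf1 y).
Proof.
move=> y_neq0; apply/eqP => E.
have [b0|b_neq0] := eqVneq (cf1 y) 0.
  move: E y_neq0; rewrite b0 (nabs0 Hw) mulr0 => /eqP; rewrite (nabs_eq0 Hw) => /eqP a0.
  by rewrite [y]decomp_1_sqrt a0 b0 !scale0r addr0 eqxx.
move: (abs_t_nonsquare (cf0 y / cf1 y)).
rewrite (nabsM Hw) (nabsV Hw) E mulrK ?unitfE ?(nabs_eq0 Hw) //.
by rewrite sqr_sqrtr ?(nabs_ge0 Hw) ?eqxx.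
Qed.

Lemma sqrt_ext_absM y1 y2 :
  sqrt_ext_abs (y1 * y2) = sqrt_ext_abs y1 * sqrt_ext_abs y2.
Proof.
have wt : w t = s * s by rewrite -expr2 sqr_sqrtr ?(nabs_ge0 Hw).
have [->|y1_neq0] := eqVneq y1 0.
  by rewrite mul0r sqrt_ext_abs0 mul0r.
have [->|y2_neq0] := eqVneq y2 0.
  by rewrite mulr0 sqrt_ext_abs0 mulr0.
have -> : y1 * y2 = (cf0 y1 * cf0 y2 + t * (cf1 y1 * cf1 y2)) *: 1
                     + (cf0 y1 * cf1 y2 + cf0 y2 * cf1 y1) *: z.
  by rewrite {1}[y1]decomp_1_sqrt {1}[y2]decomp_1_sqrt mul_1_sqrt.
rewrite /sqrt_ext_abs.
case: (coord_1_sqrt (cf0 y1 * cf0 y2 + t * (cf1 y1 * cf1 y2))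
                    (cf0 y1 * cf1 y2 + cf0 y2 * cf1 y1)) => -> ->.
apply: max_mul_ultra_sum;
  rewrite ?mulr_ge0 ?(ltW s_gt0) ?(nabs_ge0 Hw) ?coord_abs_neq //.
- have -> : s * w (cf1 y1) * (s * w (cf1 y2)) = w (t * (cf1 y1 * cf1 y2)).
    by rewrite !(nabsM Hw) wt; ring.
  by rewrite -(nabsM Hw); apply: nabsD_ultra.
- have -> : w (cf0 y1) * (s * w (cf1 y2)) = s * w (cf0 y1 * cf1 y2).
    by rewrite (nabsM Hw); ring.
  have -> : w (cf0 y2) * (s * w (cf1 y1)) = s * w (cf0 y2 * cf1 y1).
    by rewrite (nabsM Hw); ring.
  exact/ultra_sum_pM/nabsD_ultra.
Qed.

Lemma sqrt_ext_absD y1 y2 :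
  sqrt_ext_abs (y1 + y2) <= Num.max (sqrt_ext_abs y1) (sqrt_ext_abs y2).
Proof.
rewrite /sqrt_ext_abs /cf0 /cf1 !linearD /= ge_max; apply/andP; split.
  apply: le_trans (nabsD_max Hw _ _) _.
  by rewrite ge_max !le_max !lexx ?orbT.
apply: le_trans (ler_wpM2l (ltW s_gt0) (nabsD_max Hw _ _)) _.
by rewrite maxr_pMr ?(ltW s_gt0) // ge_max !le_max !lexx ?orbT.
Qed.

Lemma sqrt_ext_abs_eq0 y : sqrt_ext_abs y = 0 -> y = 0.
Proof.
apply: contra_eq => y_neq0; apply/lt0r_neq0.
rewrite /sqrt_ext_abs lt_max !lt_def !(nabs_ge0 Hw).
rewrite mulr_ge0 ?(ltW s_gt0) ?(nabs_ge0 Hw) //.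
rewrite !andbT mulf_eq0 (gt_eqF s_gt0) /= !(nabs_eq0 Hw).
apply: contraNT y_neq0; rewrite negb_or !negbK => /andP[/eqP a0 /eqP b0].
by rewrite [y]decomp_1_sqrt a0 b0 !scale0r addr0.
Qed.

Lemma nonarch_sqrt_ext_abs : nonarch_abs sqrt_ext_abs.
Proof.
split.
- by move=> y; rewrite le_max (nabs_ge0 Hw).
- exact: sqrt_ext_abs_eq0.
- exact: sqrt_ext_abs0.
- exact: sqrt_ext_absM.
- exact: sqrt_ext_absD.
Qed.

Lemma sqrt_ext_abs_base a : sqrt_ext_abs a%:A = w a.
Proof.
have := coord_1_sqrt a 0; rewrite scale0r addr0 /sqrt_ext_abs => -[-> ->].
by rewrite (nabs0 Hw) mulr0 max_l ?(nabs_ge0 Hw).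
Qed.

Lemma sqrt_ext_abs_sqrt : sqrt_ext_abs z ^+ 2 = w t.
Proof.
have := coord_1_sqrt 0 1; rewrite scale0r add0r scale1r /sqrt_ext_abs => -[-> ->].
by rewrite (nabs0 Hw) (nabs1 Hw) mulr1 max_r ?(ltW s_gt0) // sqr_sqrtr ?(nabs_ge0 Hw).
Qed.

End AdjoinSqrt.

Lemma adjoin_sqrt_abs (R : realType) (F : fieldType) (w : F -> R) (t : F) :
  nonarch_abs w -> (forall y : F, w y ^+ 2 != w t) ->
  exists (L : fieldExtType F) (w' : L -> R),
    [/\ nonarch_abs w', forall a, w' a%:A = w a & exists z : L, w' z ^+ 2 = w t].
Proof.
move=> Hw abs_t_nonsquare.
pose p : {poly F} := 'X^2 - t%:P.
have size_p : size p = 3%N by rewrite size_XnsubC.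
have irr_p : irreducible_poly p.
  apply: cubic_irreducible => [|x]; first by rewrite size_p.
  rewrite /root !hornerE subr_eq0; apply/negP => /eqP x2t.
  by move: (abs_t_nonsquare x); rewrite -(nabsX Hw) x2t eqxx.
have [L dimL [z root_z _]] := irredp_FAdjoin irr_p.
have z2 : z ^+ 2 = t%:A.
  move: root_z; rewrite /root rmorphB /= map_polyXn map_polyC /= !hornerE.
  by rewrite subr_eq0 => /eqP.
rewrite size_p in dimL.
exists L, (sqrt_ext_abs w t z); split.
- exact: nonarch_sqrt_ext_abs.
- exact: sqrt_ext_abs_base.
- by exists z; apply: sqrt_ext_abs_sqrt.
Qed.

Lemma ext_abs_with_square_roots (R : realType) (k : fieldType) (v : k -> R)
    (ds : seq k) :
  nonarch_abs v ->
  exists (K : fieldExtType k) (w : K -> R),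
    [/\ nonarch_abs w, forall a, w a%:A = v a
      & forall d, d \in ds -> exists y : K, w d%:A = w y ^+ 2].
Proof.
move=> Hv; elim: ds => [|d ds [K [w [Hw w_ext w_sq]]]].
  by exists k^o, v; split=> // a; rewrite -[a%:A]/(a * 1 : k) mulr1.
have [[y0 y0_sq]|d_nonsquare] := classic (exists y : K, w d%:A = w y ^+ 2).
  exists K, w; split=> // d'; rewrite inE => /orP[/eqP ->|/w_sq //].
  by exists y0.
have [|L [w' [Hw' w'_ext [z z_sq]]]] := adjoin_sqrt_abs Hw (t := d%:A).
  by move=> y; apply/eqP => E; apply: d_nonsquare; exists y.
exists (baseFieldType L), w'; split => //.
- by move=> a; rewrite -w_ext; apply: w'_ext.
- move=> d'; rewrite inE => /orP[/eqP ->|/w_sq [y y_sq]].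
    by exists z; rewrite z_sq; apply: w'_ext.
  exists (y%:A : L).
  change (w' ((d'%:A : K)%:A : L) = w' (y%:A : L) ^+ 2).
  by rewrite !w'_ext y_sq.
Qed.

Section Matrix2.
Variable F : comNzRingType.

Lemma ord2P (i : 'I_2) : i = 0 \/ i = 1.
Proof. by case: i => [[|[|//]]] Hi; [left|right]; apply: val_inj. Qed.

Definition mx2 (a b c d : F) : 'M[F]_2 :=
  \matrix_(i, j) if i == 0 then (if j == 0 then a else b)
                 else (if j == 0 then c else d).

Definition vc2 (a b : F) : 'cV[F]_2 := \col_i if i == 0 then a else b.

Lemma mx2_eta (M : 'M[F]_2) : M = mx2 (M 0 0) (M 0 1) (M 1 0) (M 1 1).
Proof.
by apply/matrixP=> i j; rewrite !mxE; case: (ord2P i) => ->; case: (ord2P j) => ->.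
Qed.

Lemma vc2_eta (x : 'cV[F]_2) : x = vc2 (x 0 0) (x 1 0).
Proof. by apply/matrixP=> i j; rewrite !mxE (ord1 j); case: (ord2P i) => ->. Qed.

Lemma mx2_1 : 1%:M = mx2 1 0 0 1.
Proof.
by apply/matrixP=> i j; rewrite !mxE; case: (ord2P i) => ->; case: (ord2P j) => ->.
Qed.

Lemma mulmx2 a b c d a' b' c' d' :
  mx2 a b c d *m mx2 a' b' c' d'
  = mx2 (a * a' + b * c') (a * b' + b * d') (c * a' + d * c') (c * b' + d * d').
Proof.
apply/matrixP=> i j; rewrite !mxE !big_ord_recl big_ord0 !mxE addr0 /=.
by case: (ord2P i) => ->; case: (ord2P j) => ->.
Qed.

Lemma mulmx2_vc2 a b c d x y :
  mx2 a b c d *m vc2 x y = vc2 (a * x + b * y) (c * x + d * y).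
Proof.
apply/matrixP=> i j; rewrite !mxE !big_ord_recl big_ord0 !mxE addr0 /=.
by case: (ord2P i) => ->.
Qed.

Lemma det_mx2 a b c d : \det (mx2 a b c d) = a * d - b * c.
Proof.
rewrite (expand_det_row _ 0) !big_ord_recl big_ord0 addr0 /cofactor !det_mx11.
by rewrite !mxE /= expr0 expr1; ring.
Qed.

Lemma scale_vc2 c a b : c *: vc2 a b = vc2 (c * a) (c * b).
Proof. by apply/matrixP=> i j; rewrite !mxE; case: (ord2P i) => ->. Qed.

Lemma vc2_eq0 a b : (vc2 a b == 0) = (a == 0) && (b == 0).
Proof.
apply/eqP/andP => [/matrixP E|[/eqP-> /eqP->]].
  by have := E 0 0; have := E 1 0; rewrite !mxE /= => -> ->.
by apply/matrixP => i j; rewrite !mxE; case: (ord2P i) => ->.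
Qed.

Lemma vc2_inj a b a' b' : vc2 a b = vc2 a' b' -> a = a' /\ b = b'.
Proof. by move/matrixP => e; have := e 0 0; have := e 1 0; rewrite !mxE. Qed.

Lemma mulmx_vc2_10 (M : 'M[F]_2) : M *m vc2 1 0 = vc2 (M 0 0) (M 1 0).
Proof. by rewrite [M]mx2_eta mulmx2_vc2 !mulr1 !mulr0 !addr0 !mxE. Qed.

Lemma mulmx_vc2_01 (M : 'M[F]_2) : M *m vc2 0 1 = vc2 (M 0 1) (M 1 1).
Proof. by rewrite [M]mx2_eta mulmx2_vc2 !mulr1 !mulr0 !add0r !mxE. Qed.

Lemma mx2_col_eq (M N : 'M[F]_2) :
  M *m vc2 1 0 = N *m vc2 1 0 -> M *m vc2 0 1 = N *m vc2 0 1 -> M = N.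
Proof.
rewrite !mulmx_vc2_10 !mulmx_vc2_01 => /vc2_inj[E00 E10] /vc2_inj[E01 E11].
by rewrite [M]mx2_eta [N]mx2_eta E00 E10 E01 E11.
Qed.

Definition swap_mx2 : 'M[F]_2 := mx2 0 1 1 0.

Lemma swap_mx2_mull a b c d : swap_mx2 *m mx2 a b c d = mx2 c d a b.
Proof. by rewrite /swap_mx2 mulmx2; congr mx2; ring. Qed.

Lemma swap_mx2_mulr a b c d : mx2 a b c d *m swap_mx2 = mx2 b a d c.
Proof. by rewrite /swap_mx2 mulmx2; congr mx2; ring. Qed.

Lemma swap_mx2K : swap_mx2 *m swap_mx2 = 1%:M.
Proof. by rewrite swap_mx2_mull mx2_1. Qed.

End Matrix2.

Lemma unit_mx2 (F : fieldType) (a b c d : F) :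
  (mx2 a b c d \in unitmx) = (a * d - b * c != 0).
Proof. by rewrite unitmxE det_mx2 unitfE. Qed.

Section IntegralMatrices.
Variables (R : realType) (F : fieldType) (w : F -> R).
Hypothesis Hw : nonarch_abs w.

Definition integral_mx m n (M : 'M[F]_(m, n)) := forall i j, w (M i j) <= 1.

Definition integral_unitmx n (U : 'M[F]_n) :=
  exists V, [/\ integral_mx U, integral_mx V, U *m V = 1%:M & V *m U = 1%:M].

Lemma integral_mxM m n p (A : 'M[F]_(m, n)) (B : 'M[F]_(n, p)) :
  integral_mx A -> integral_mx B -> integral_mx (A *m B).
Proof.
move=> intA intB i j; rewrite mxE.
apply: (big_ind (fun x => w x <= 1)); first by rewrite (nabs0 Hw) ler01.
  by move=> x y; apply: nabsD_le.
by move=> l _; apply: nabs_mul_le1.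
Qed.

Lemma integral_mxZ m n e (M : 'M[F]_(m, n)) :
  w e <= 1 -> integral_mx M -> integral_mx (e *: M).
Proof. by move=> he intM i j; rewrite mxE nabs_mul_le1. Qed.

Lemma integral_mx2 a b c d :
  integral_mx (mx2 a b c d) <-> [/\ w a <= 1, w b <= 1, w c <= 1 & w d <= 1].
Proof.
split=> [H|[ha hb hc hd] i j].
  by have := H 0 0; have := H 0 1; have := H 1 0; have := H 1 1; rewrite !mxE.
by rewrite !mxE; case: (ord2P i) => ->; case: (ord2P j) => ->.
Qed.

Lemma integral_vc2 a b : integral_mx (vc2 a b) <-> w a <= 1 /\ w b <= 1.
Proof.
split=> [H|[ha hb] i j]; first by have := H 0 0; have := H 1 0; rewrite !mxE.
by rewrite !mxE; case: (ord2P i) => ->.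
Qed.

Lemma integral_mx_of_action n (M : 'M[F]_n) :
  (forall x : 'cV[F]_n, integral_mx x -> integral_mx (M *m x)) -> integral_mx M.
Proof.
move=> H i j.
have int_delta : integral_mx (delta_mx j 0 : 'cV[F]_n).
  by move=> l l'; rewrite mxE; case: (_ && _); rewrite ?(nabs1 Hw) ?(nabs0 Hw) ?ler01.
by have := H _ int_delta i 0; rewrite -colE mxE.
Qed.

Lemma integral_unitmx_unit n (U : 'M[F]_n) : integral_unitmx U -> U \in unitmx.
Proof. by case=> V [_ _ /mulmx1_unit[]]. Qed.

Lemma integral_unitmxM n (U V : 'M[F]_n) :
  integral_unitmx U -> integral_unitmx V -> integral_unitmx (U *m V).
Proof.
case=> U' [intU intU' UU' U'U] [V' [intV intV' VV' V'V]].
exists (V' *m U'); split; try exact: integral_mxM.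
  by rewrite -mulmxA (mulmxA V) VV' mul1mx.
by rewrite -mulmxA (mulmxA U') U'U mul1mx.
Qed.

Lemma integral_unitmx_mul_integral n p (U : 'M[F]_n) (x : 'M[F]_(n, p)) :
  integral_unitmx U -> integral_mx (U *m x) <-> integral_mx x.
Proof.
case=> U' [intU intU' _ U'U]; split; last exact: integral_mxM.
by move=> intUx; rewrite -[x]mul1mx -U'U -mulmxA; apply: integral_mxM.
Qed.

Lemma integral_unitmx_swap : integral_unitmx (swap_mx2 F).
Proof.
exists (swap_mx2 F); rewrite swap_mx2K.
by split=> //; apply/integral_mx2; split; rewrite ?(nabs0 Hw) ?(nabs1 Hw) ?ler01.
Qed.

Lemma integral_unitmx_lower c : w c <= 1 -> integral_unitmx (mx2 1 0 c 1).
Proof.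
move=> hc; exists (mx2 1 0 (- c) 1); rewrite !mulmx2 mx2_1.
rewrite !(mul0r, mul1r, mulr0, mulr1, addr0, add0r) addrN addNr.
by split=> //; apply/integral_mx2; split;
  rewrite ?(nabsN Hw) ?(nabs0 Hw) ?(nabs1 Hw) ?ler01.
Qed.

Lemma integral_unitmx_upper c : w c <= 1 -> integral_unitmx (mx2 1 c 0 1).
Proof.
move=> hc; exists (mx2 1 (- c) 0 1); rewrite !mulmx2 mx2_1.
rewrite !(mul0r, mul1r, mulr0, mulr1, addr0, add0r) addrN addNr.
by split=> //; apply/integral_mx2; split;
  rewrite ?(nabsN Hw) ?(nabs0 Hw) ?(nabs1 Hw) ?ler01.
Qed.

Definition int_diagonalizable (T : 'M[F]_2) :=
  exists U V d1 d2,
    [/\ integral_unitmx U, integral_unitmx V & T = U *m mx2 d1 0 0 d2 *m V].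

Lemma int_diagonalizable_pivot a b c d :
  w b <= w a -> w c <= w a -> a != 0 -> int_diagonalizable (mx2 a b c d).
Proof.
move=> le_ba le_ca a_neq0.
exists (mx2 1 0 (c / a) 1), (mx2 1 (b / a) 0 1), a, (d - c * b / a); split.
- exact/integral_unitmx_lower/nabs_div_le1.
- exact/integral_unitmx_upper/nabs_div_le1.
- by rewrite !mulmx2; congr mx2; field.
Qed.

Lemma int_diagonalizable_swapl T :
  int_diagonalizable (swap_mx2 F *m T) -> int_diagonalizable T.
Proof.
case=> U [V [d1 [d2 [intU intV E]]]].
exists (swap_mx2 F *m U), V, d1, d2; split=> //.
  exact: integral_unitmxM integral_unitmx_swap intU.
by rewrite -!mulmxA (mulmxA U) -E mulmxA swap_mx2K mul1mx.
Qed.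

Lemma int_diagonalizable_swapr T :
  int_diagonalizable (T *m swap_mx2 F) -> int_diagonalizable T.
Proof.
case=> U [V [d1 [d2 [intU intV E]]]].
exists U, (V *m swap_mx2 F), d1, d2; split=> //.
  exact: integral_unitmxM intV integral_unitmx_swap.
by rewrite mulmxA -E -mulmxA swap_mx2K mulmx1.
Qed.

(* Moving an entry of maximal absolute value to the pivot position by row
   and column swaps. *)
Lemma int_diagonalizable_unit T : T \in unitmx -> int_diagonalizable T.
Proof.
rewrite [T]mx2_eta unit_mx2; move: (T 0 0) (T 0 1) (T 1 0) (T 1 1) => a b c d.
wlog le_rows : a b c d / Num.max (w c) (w d) <= Num.max (w a) (w b).
  move=> H det_neq0.
  have [le|lt] := leP (Num.max (w c) (w d)) (Num.max (w a) (w b)); first exact: H.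
  apply: int_diagonalizable_swapl; rewrite swap_mx2_mull; apply: H; first exact: ltW.
  by rewrite -oppr_eq0 opprB [d * a]mulrC [c * b]mulrC.
wlog le_cols : a b c d le_rows / w b <= w a.
  move=> H det_neq0; have [le|lt] := leP (w b) (w a); first exact: H.
  apply: int_diagonalizable_swapr; rewrite swap_mx2_mulr; apply: H.
  - by rewrite maxC [Num.max (w b) _]maxC.
  - exact: ltW.
  - by rewrite -oppr_eq0 opprB.
move=> det_neq0; apply: int_diagonalizable_pivot => //.
  apply: le_trans (le_trans _ le_rows) _; first by rewrite le_max lexx.
  by rewrite ge_max le_cols lexx.
apply: contraNneq det_neq0 => a0; move: le_cols; rewrite a0 (nabs0 Hw) => le_b0.
have /eqP b0 : b == 0 by rewrite -(nabs_eq0 Hw) eq_le le_b0 (nabs_ge0 Hw).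
by rewrite b0 !mul0r subr0.
Qed.

End IntegralMatrices.

Section LatticeMeet.
Variables (R : realType) (F : fieldType) (w : F -> R).
Hypothesis Hw : nonarch_abs w.

Lemma nabs_meet_le1 d :
  exists2 e, e != 0 & forall y, w y <= 1 /\ w (d * y) <= 1 <-> w (e * y) <= 1.
Proof.
have wy_ge0 := nabs_ge0 Hw; have [le1d|ltd1] := leP 1 (w d).
  exists d; first by rewrite -(nabs_gt0 Hw) (lt_le_trans ltr01).
  move=> y; split=> [[] //|le1]; split=> //.
  by move: le1; rewrite (nabsM Hw) => le1; have := wy_ge0 y; nra.
exists 1; rewrite ?oner_eq0 // => y; rewrite mul1r (nabsM Hw).
split=> [[] //|le1]; split=> //.
by have := wy_ge0 y; have := wy_ge0 d; nra.
Qed.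

Lemma lattice_meet2 (Q1 Q2 : 'M[F]_2) : Q1 \in unitmx -> Q2 \in unitmx ->
  exists2 Q, Q \in unitmx & forall x : 'cV[F]_2,
    integral_mx w (Q *m x) <-> integral_mx w (Q1 *m x) /\ integral_mx w (Q2 *m x).
Proof.
move=> Q1_unit Q2_unit.
have /(int_diagonalizable_unit Hw) [U [V [d1 [d2 [intU intV E]]]]] :
    Q2 *m invmx Q1 \in unitmx by rewrite unitmx_mul Q2_unit unitmx_inv.
have [e1 e1_neq0 meet1] := nabs_meet_le1 d1.
have [e2 e2_neq0 meet2] := nabs_meet_le1 d2.
exists (mx2 e1 0 0 e2 *m V *m Q1).
  rewrite !unitmx_mul Q1_unit (integral_unitmx_unit intV) unit_mx2.
  by rewrite mulr0 subr0 mulf_neq0.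
move=> x; have -> : Q2 *m x = U *m (mx2 d1 0 0 d2 *m (V *m (Q1 *m x))).
  by rewrite !mulmxA -E mulmxKV.
rewrite (integral_unitmx_mul_integral Hw _ intU).
rewrite -[integral_mx w (Q1 *m x)](integral_unitmx_mul_integral Hw _ intV).
rewrite -!mulmxA; move: (V *m (Q1 *m x)) => y.
rewrite [y]vc2_eta !mulmx2_vc2 !integral_vc2 !mul0r !addr0 !add0r -meet1 -meet2.
by split=> [[[? ?] [? ?]]|[[? ?] [? ?]]].
Qed.

Lemma lattice_meet (Qs : seq 'M[F]_2) : all (fun Q => Q \in unitmx) Qs ->
  exists2 Q, Q \in unitmx & forall x : 'cV[F]_2, integral_mx w (Q *m x)
    <-> integral_mx w x /\ forall A, A \in Qs -> integral_mx w (A *m x).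
Proof.
elim: Qs => [_|A Qs IH /= /andP[A_unit /IH [Q Q_unit HQ]]].
  by exists 1%:M; rewrite ?unitmx1 // => x; rewrite mul1mx; split=> [|[]].
have [Q' Q'_unit HQ'] := lattice_meet2 Q_unit A_unit.
exists Q' => // x; rewrite HQ' HQ; split=> [[[intx intQs] intA]|[intx intAQs]].
  by split=> // B; rewrite inE => /orP[/eqP ->|/intQs].
by split; [split=> // B BQs|]; apply: intAQs; rewrite inE ?BQs ?orbT ?eqxx.
Qed.

End LatticeMeet.

Section ProjectiveLine.
Variable k : fieldType.
Implicit Types (g M : 'M[k]_2) (x y z : 'cV[k]_2).

Definition proportional x y := exists c : k, c != 0 /\ x = c *: y.

Lemma proportional_sym x y : proportional x y -> proportional y x.
Proof.
case=> c [c_neq0 ->]; exists c^-1; split; first by rewrite invr_eq0.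
by rewrite scalerA mulVf // scale1r.
Qed.

Lemma proportional_trans x y z :
  proportional x y -> proportional y z -> proportional x z.
Proof.
case=> a [a_neq0 ->] [b [b_neq0 ->]]; exists (a * b).
by rewrite mulf_neq0 // scalerA.
Qed.

Lemma proportional_mulmx g x y :
  proportional x y -> proportional (g *m x) (g *m y).
Proof. by case=> c [c_neq0 ->]; exists c; rewrite -scalemxAr. Qed.

Lemma proportional_mulmxI g x y : g \in unitmx ->
  proportional (g *m x) (g *m y) -> proportional x y.
Proof. by move=> g_unit /(proportional_mulmx (invmx g)); rewrite !mulKmx. Qed.

Lemma unitmx_mul_neq0 g x : g \in unitmx -> x != 0 -> g *m x != 0.
Proof.
by move=> g_unit; apply: contraNneq => gx0; rewrite -(mulKmx g_unit x) gx0 mulmx0.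
Qed.

Definition cols2 x y : 'M[k]_2 := mx2 (x 0 0) (y 0 0) (x 1 0) (y 1 0).

Lemma cols2_vc2 x y a b : cols2 x y *m vc2 a b = a *: x + b *: y.
Proof.
rewrite mulmx2_vc2 [x in RHS]vc2_eta [y in RHS]vc2_eta !scale_vc2.
by apply/matrixP=> i j; rewrite !mxE; case: (ord2P i) => -> /=; ring.
Qed.

Lemma cols2_10 x y : cols2 x y *m vc2 1 0 = x.
Proof. by rewrite cols2_vc2 scale1r scale0r addr0. Qed.

Lemma cols2_01 x y : cols2 x y *m vc2 0 1 = y.
Proof. by rewrite cols2_vc2 scale1r scale0r add0r. Qed.

Lemma cols2_unit x y :
  x != 0 -> y != 0 -> ~ proportional x y -> cols2 x y \in unitmx.
Proof.
move=> x_neq0 y_neq0 not_xy; rewrite unitmxE unitfE -det_tr.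
apply/det0P => -[u u_neq0 /(congr1 trmx)]; rewrite trmx_mul trmxK trmx0.
rewrite -trmx_eq0 [u^T]vc2_eta vc2_eq0 in u_neq0; rewrite [u^T]vc2_eta cols2_vc2.
move: u_neq0; set a := u^T 0 0; set b := u^T 1 0 => u_neq0 /eqP.
rewrite addr_eq0 => /eqP ax.
have [a0|a_neq0] := eqVneq a 0.
  move: ax; rewrite a0 scale0r => /eqP; rewrite eq_sym oppr_eq0 scaler_eq0.
  by rewrite (negbTE y_neq0) orbF => /eqP b0; rewrite a0 b0 eqxx /= in u_neq0.
have xE : x = (- (b / a)) *: y.
  by rewrite -[x](scalerK a_neq0) ax scalerN scalerA mulrC scaleNr.
apply: not_xy; exists (- (b / a)); split=> //.
rewrite oppr_eq0 mulf_eq0 invr_eq0 (negbTE a_neq0) orbF.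
by apply: contraNneq x_neq0 => b0; rewrite xE b0 mul0r oppr0 scale0r.
Qed.

Lemma mulmx_conj_basis (B g : 'M[k]_2) e f x y c : B \in unitmx ->
  B *m e = x -> g *m x = c *: y -> B *m f = y -> (invmx B *m g *m B) *m e = c *: f.
Proof. by move=> B_unit Be gx Bf; rewrite -!mulmxA Be gx -Bf -scalemxAr mulKmx. Qed.

End ProjectiveLine.

Section FiniteOrbit.
Variable k : fieldType.
Implicit Types (G : 'M[k]_2 -> Prop) (g a M : 'M[k]_2) (x y : 'cV[k]_2).

Lemma conj_affine_of_fixed_point G x :
  x != 0 -> (forall g, G g -> proportional (g *m x) x) -> conj_into (@affine_mx k) G.
Proof.
move=> x_neq0 fixed.
pose e : 'cV[k]_2 := if x 0 0 == 0 then vc2 1 0 else vc2 0 1.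
have B_unit : cols2 x e \in unitmx.
  rewrite unit_mx2 /e; case: ifP => x00; rewrite !mxE /=.
    rewrite mulr0 mul1r sub0r oppr_eq0.
    by move: x_neq0; rewrite {1}[x]vc2_eta vc2_eq0 x00.
  by rewrite mulr1 mul0r subr0 x00.
exists (invmx (cols2 x e)); split; first by rewrite unitmx_inv.
move=> g /fixed [c [_ gx]]; rewrite invmxK.
have := mulmx_conj_basis B_unit (cols2_10 x e) gx (cols2_10 x e).
by rewrite mulmx_vc2_10 scale_vc2 mulr0 => /vc2_inj[].
Qed.

Lemma conj_monomial_of_stable_pair G x y :
  x != 0 -> y != 0 -> ~ proportional x y ->
  (forall g, G g -> proportional (g *m x) x /\ proportional (g *m y) y
                 \/ proportional (g *m x) y /\ proportional (g *m y) x) ->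
  conj_into (@monomial_mx k) G.
Proof.
move=> x_neq0 y_neq0 not_xy stable.
have B_unit := cols2_unit x_neq0 y_neq0 not_xy.
exists (invmx (cols2 x y)); split; first by rewrite unitmx_inv.
move=> g Gg; rewrite invmxK.
have [[[c [_ gx]] [d [_ gy]]]|[[c [_ gx]] [d [_ gy]]]] := stable g Gg; [left|right].
- have := mulmx_conj_basis B_unit (cols2_10 x y) gx (cols2_10 x y).
  have := mulmx_conj_basis B_unit (cols2_01 x y) gy (cols2_01 x y).
  rewrite mulmx_vc2_10 mulmx_vc2_01 !scale_vc2 !mulr0.
  by move=> /vc2_inj[-> _] /vc2_inj[_ ->].
- have := mulmx_conj_basis B_unit (cols2_10 x y) gx (cols2_01 x y).
  have := mulmx_conj_basis B_unit (cols2_01 x y) gy (cols2_10 x y).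
  rewrite mulmx_vc2_10 mulmx_vc2_01 !scale_vc2 !mulr0.
  by move=> /vc2_inj[_ ->] /vc2_inj[-> _].
Qed.

Lemma stable_pair_of_orbit G g1 x :
  (forall g, G g -> g \in unitmx) -> (forall a b, G a -> G b -> G (a *m b)) ->
  G g1 -> ~ proportional (g1 *m x) x ->
  (forall g, G g -> proportional (g *m x) x \/ proportional (g *m x) (g1 *m x)) ->
  forall g, G g ->
    proportional (g *m x) x /\ proportional (g *m (g1 *m x)) (g1 *m x)
    \/ proportional (g *m x) (g1 *m x) /\ proportional (g *m (g1 *m x)) x.
Proof.
move=> G_unit G_mul G1 not_fixed orbit g Gg.
have not_both y : proportional (g *m x) y -> ~ proportional (g *m (g1 *m x)) y.
  move=> gx gx1; apply/not_fixed/proportional_sym/(proportional_mulmxI (G_unit g Gg)).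
  exact: proportional_trans gx (proportional_sym gx1).
have := orbit _ (G_mul _ _ Gg G1); rewrite -mulmxA.
by case: (orbit g Gg) => gx [] gx1; do ?[by left | by right | by case: (not_both _ gx)].
Qed.

Lemma scalar_of_three_fixed_points M x0 x1 x2 :
  x0 != 0 -> x1 != 0 -> x2 != 0 ->
  ~ proportional x0 x1 -> ~ proportional x0 x2 -> ~ proportional x1 x2 ->
  proportional (M *m x0) x0 -> proportional (M *m x1) x1 ->
  proportional (M *m x2) x2 ->
  exists2 c, c != 0 & M = c%:M.
Proof.
move=> x0_neq0 x1_neq0 x2_neq0 not01 not02 not12.
move=> [l0 [l0_neq0 Mx0]] [l1 [_ Mx1]] [l2 [_ Mx2]].
have B_unit := cols2_unit x0_neq0 x1_neq0 not01.
set B := cols2 x0 x1 in B_unit; set u := invmx B *m x2.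
have x2E : x2 = u 0 0 *: x0 + u 1 0 *: x1 by rewrite -cols2_vc2 -vc2_eta mulKVmx.
have u0_neq0 : u 0 0 != 0.
  apply/eqP => u0; apply: not12; apply: proportional_sym; exists (u 1 0); split.
    by apply: contraNneq x2_neq0 => u1; rewrite x2E u0 u1 !scale0r addr0.
  by rewrite x2E u0 scale0r add0r.
have u1_neq0 : u 1 0 != 0.
  apply/eqP => u1; apply: not02; apply: proportional_sym; exists (u 0 0); split.
    by apply: contraNneq x2_neq0 => u0; rewrite x2E u0 u1 !scale0r addr0.
  by rewrite x2E u1 scale0r addr0.
have : B *m vc2 (u 0 0 * l0) (u 1 0 * l1) = B *m vc2 (u 0 0 * l2) (u 1 0 * l2).
  rewrite !cols2_vc2 -!scalerA -Mx0 -Mx1 !scalemxAr -mulmxDr -x2E Mx2 x2E.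
  by rewrite scalerDr !scalerA [l2 * u 0 0]mulrC [l2 * u 1 0]mulrC.
move=> /(can_inj (mulKmx B_unit)) /vc2_inj[/(mulfI u0_neq0) l02 /(mulfI u1_neq0) l12].
exists l0 => //; apply: (can_inj (mulmxK B_unit)); apply: mx2_col_eq.
  by rewrite -!mulmxA cols2_10 Mx0 mul_scalar_mx.
by rewrite -!mulmxA cols2_01 Mx1 mul_scalar_mx l12 l02.
Qed.

Lemma scale_of_three_equal_images g a x0 x1 x2 : a \in unitmx ->
  x0 != 0 -> x1 != 0 -> x2 != 0 ->
  ~ proportional x0 x1 -> ~ proportional x0 x2 -> ~ proportional x1 x2 ->
  proportional (g *m x0) (a *m x0) -> proportional (g *m x1) (a *m x1) ->
  proportional (g *m x2) (a *m x2) ->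
  exists2 c, c != 0 & g = c *: a.
Proof.
move=> a_unit x0_neq0 x1_neq0 x2_neq0 not01 not02 not12 gx0 gx1 gx2.
have fixed y : proportional (g *m y) (a *m y) -> proportional ((invmx a *m g) *m y) y.
  by move=> /(proportional_mulmx (invmx a)); rewrite mulKmx // mulmxA.
have [c c_neq0 E] := scalar_of_three_fixed_points x0_neq0 x1_neq0 x2_neq0
  not01 not02 not12 (fixed _ gx0) (fixed _ gx1) (fixed _ gx2).
by exists c => //; rewrite -(mulKVmx a_unit g) E mul_mx_scalar.
Qed.

End FiniteOrbit.

Lemma finite_witnesses (A I : eqType) (P : A -> Prop) (rel : A -> I -> Prop)
    (idx : seq I) :
  exists L : seq A, (forall a, a \in L -> P a) /\
    forall i a, i \in idx -> P a -> rel a i -> exists2 b, b \in L & rel b i.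
Proof.
elim: idx => [|i idx [L [L_P L_rel]]]; first by exists [::].
have [[a [Pa rel_ai]]|no_a] := classic (exists a, P a /\ rel a i).
  exists (a :: L); split=> [b|j b]; rewrite inE.
    by case/orP=> [/eqP ->|/L_P].
  case/orP=> [/eqP -> _ _|j_idx Pb rel_bj]; first by exists a; rewrite ?inE ?eqxx.
  have [c c_L rel_cj] := L_rel j b j_idx Pb rel_bj.
  by exists c; rewrite // inE c_L orbT.
exists L; split=> // j b; rewrite inE => /orP[/eqP -> Pb rel_bi|]; last exact: L_rel.
by case: no_a; exists b.
Qed.

(* An element of G is determined up to a scalar by the images of the three
   points [x], [g1 x], [g2 x], and these images lie in the finite orbit. *)
Lemma finite_mod_scalars (k : fieldType) (G : 'M[k]_2 -> Prop) x g1 g2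
    (ws : seq 'cV[k]_2) :
  (forall g, G g -> g \in unitmx) -> (forall a b, G a -> G b -> G (a *m b)) ->
  G g1 -> G g2 -> x != 0 -> ~ proportional x (g1 *m x) ->
  ~ proportional x (g2 *m x) -> ~ proportional (g1 *m x) (g2 *m x) ->
  (forall g, G g -> exists2 y, y \in ws & proportional (g *m x) y) ->
  exists Lg : seq 'M[k]_2, (forall g, g \in Lg -> G g) /\
    forall g, G g -> exists2 g0, g0 \in Lg & exists2 c, c != 0 & g = c *: g0.
Proof.
move=> G_unit G_mul G1 G2 x_neq0 not01 not02 not12 orbit.
set x1 := g1 *m x in not01 not12; set x2 := g2 *m x in not02 not12.
have x1_neq0 : x1 != 0 by apply: unitmx_mul_neq0 => //; apply: G_unit.
have x2_neq0 : x2 != 0 by apply: unitmx_mul_neq0 => //; apply: G_unit.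
pose idx := [seq (p, y2) | p <- [seq (y0, y1) | y0 <- ws, y1 <- ws], y2 <- ws].
pose rel g (t : 'cV[k]_2 * 'cV[k]_2 * 'cV[k]_2) :=
  [/\ proportional (g *m x) t.1.1, proportional (g *m x1) t.1.2
    & proportional (g *m x2) t.2].
have [L [L_G L_rel]] := finite_witnesses G rel idx.
exists L; split=> // g Gg.
have orbit_of h : G h -> exists2 y, y \in ws & proportional (g *m (h *m x)) y.
  by move=> Gh; rewrite mulmxA; apply/orbit/G_mul.
have [y0 y0_ws gy0] := orbit g Gg.
have [y1 y1_ws gy1] := orbit_of g1 G1.
have [y2 y2_ws gy2] := orbit_of g2 G2.
have [a a_L [ay0 ay1 ay2]] := L_rel ((y0, y1), y2) g
  (allpairs_f pair (allpairs_f pair y0_ws y1_ws) y2_ws) Gg (And3 gy0 gy1 gy2).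
exists a => //; apply: scale_of_three_equal_images (G_unit _ (L_G _ a_L))
  x_neq0 x1_neq0 x2_neq0 not01 not02 not12 _ _ _.
- exact: proportional_trans gy0 (proportional_sym ay0).
- exact: proportional_trans gy1 (proportional_sym ay1).
- exact: proportional_trans gy2 (proportional_sym ay2).
Qed.

Lemma stable_lattice (R : realType) (K : fieldType) (w : K -> R)
    (S : 'M[K]_2 -> Prop) (Ls : seq 'M[K]_2) :
  nonarch_abs w ->
  (forall A B, S A -> S B -> S (A *m B)) ->
  (forall A, A \in Ls -> S A /\ A \in unitmx) ->
  (forall A, S A -> exists2 A0, A0 \in Ls & exists2 e, w e = 1 & A = e *: A0) ->
  exists2 Q, Q \in unitmx & forall A, S A -> integral_mx w (Q *m A *m invmx Q).
Proof.
move=> Hw S_mul Ls_S S_cover.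
have [|Q Q_unit HQ] := lattice_meet Hw (Qs := Ls); first by apply/allP => A /Ls_S[].
have stable A (x : 'cV[K]_2) : S A -> integral_mx w (Q *m x) -> integral_mx w (A *m x).
  move=> /S_cover[A0 A0_Ls [e we ->]] /(HQ x).1[_ intA0x].
  by rewrite -scalemxAl; apply: (integral_mxZ Hw); [rewrite we | apply: intA0x].
exists Q => // A SA; apply: (integral_mx_of_action Hw) => y int_y.
have Qx : Q *m (invmx Q *m y) = y by rewrite mulKVmx.
rewrite -!mulmxA; apply/(HQ _).2; split; first by apply: stable SA _; rewrite Qx.
move=> A' /Ls_S[SA' _]; rewrite mulmxA.
by apply: stable (S_mul _ _ SA' SA) _; rewrite Qx.
Qed.

Section GoodReduction.
Variables (R : realType) (k : fieldType) (v : k -> R).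
Variables (G : 'M[k]_2 -> Prop) (Lg : seq 'M[k]_2).
Hypothesis G_unit : forall g, G g -> g \in unitmx.
Hypothesis G_mul : forall a b, G a -> G b -> G (a *m b).
Hypothesis Lg_G : forall g, g \in Lg -> G g.
Hypothesis Lg_cover :
  forall g, G g -> exists2 g0, g0 \in Lg & exists2 c, c != 0 & g = c *: g0.
Variables (K : fieldExtType k) (w : K -> R).
Hypotheses (Hw : nonarch_abs w) (w_ext : forall a, w a%:A = v a).
Hypothesis det_sqrt : forall g, g \in Lg -> exists y : K, w (\det g)%:A = w y ^+ 2.

Let phi (g : 'M[k]_2) : 'M[K]_2 := map_mx (in_alg K) g.

Let unimodular_lift (A : 'M[K]_2) :=
  exists2 g, G g & exists mu, A = mu *: phi g /\ w (\det A) = 1.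

Let unimodular_liftM A B :
  unimodular_lift A -> unimodular_lift B -> unimodular_lift (A *m B).
Proof.
case=> g Gg [mu [-> dA]] [h Gh [nu [-> dB]]]; exists (g *m h); first exact: G_mul.
exists (mu * nu); split; first by rewrite /phi map_mxM -scalemxAl -scalemxAr scalerA.
by rewrite det_mulmx (nabsM Hw) dA dB mulr1.
Qed.

Let unimodular_lift_unit A : unimodular_lift A -> A \in unitmx.
Proof.
by case=> g _ [mu [_ dA]]; rewrite unitmxE unitfE -(nabs_eq0 Hw) dA oner_eq0.
Qed.

Let unimodular_lift_of g : G g -> exists2 mu, mu != 0 & unimodular_lift (mu *: phi g).
Proof.
move=> Gg; have [g0 g0_Lg [c c_neq0 g_eq]] := Lg_cover Gg.
have [y y_sq] := det_sqrt g0_Lg.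
have y_neq0 : y != 0.
  apply/eqP => y0; move: y_sq; rewrite y0 (nabs0 Hw) expr0n /= => /eqP.
  rewrite (nabs_eq0 Hw) -in_algE fmorph_eq0 => /eqP d0.
  by move: (G_unit (Lg_G g0_Lg)); rewrite unitmxE d0 unitr0.
have cy_neq0 : c%:A * y != 0 by rewrite mulf_neq0 // -in_algE fmorph_eq0.
exists (c%:A * y)^-1; first by rewrite invr_eq0.
exists g => //; exists (c%:A * y)^-1; split=> //.
have -> : \det ((c%:A * y)^-1 *: phi g) = ((c%:A * y)^-1 * c%:A) ^+ 2 * (\det g0)%:A.
  by rewrite g_eq /phi map_mxZ !detZ det_map_mx exprMn mulrA.
rewrite (nabsM Hw) y_sq (nabsX Hw) -exprMn -(nabsM Hw) -mulrA mulVf //.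
by rewrite (nabs1 Hw) expr1n.
Qed.

Let unimodular_lift_finite : exists Ls : seq 'M[K]_2,
  (forall A, A \in Ls -> unimodular_lift A /\ A \in unitmx) /\
  forall A, unimodular_lift A ->
    exists2 A0, A0 \in Ls & exists2 e, w e = 1 & A = e *: A0.
Proof.
have [Ls [Ls_S Ls_rel]] :=
  finite_witnesses unimodular_lift (fun A g => exists mu, A = mu *: phi g) Lg.
exists Ls; split=> [A /Ls_S SA|A SA]; first by split; last exact: unimodular_lift_unit.
case: (SA) => g Gg [mu [A_eq dA]]; have [g0 g0_Lg [c c_neq0 g_eq]] := Lg_cover Gg.
have [|A0 A0_Ls [nu A0_eq]] := Ls_rel g0 A g0_Lg SA.
  by exists (mu * c%:A); rewrite A_eq g_eq /phi map_mxZ scalerA.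
have [SA0 A0_unit] : unimodular_lift A0 /\ A0 \in unitmx.
  by split; [apply: Ls_S | apply: unimodular_lift_unit; apply: Ls_S].
have nu_neq0 : nu != 0.
  by apply: contraTneq A0_unit => nu0; rewrite A0_eq nu0 scale0r unitmxE det0 unitr0.
pose e := mu * c%:A / nu.
have A_e : A = e *: A0.
  by rewrite A0_eq scalerA divfK // A_eq g_eq /phi map_mxZ scalerA.
exists A0 => //; exists e => //.
have [_ _ [_ [_ dA0]]] := SA0.
have := dA; rewrite A_e detZ (nabsM Hw) dA0 mulr1 (nabsX Hw) expr2 => e2.
by have := nabs_ge0 Hw e; nra.
Qed.

Lemma good_reduction_in_ext : potential_good_reduction v G.
Proof.
have [Ls [Ls_S Ls_cover]] := unimodular_lift_finite.
have [Q Q_unit HQ] := stable_lattice Hw unimodular_liftM Ls_S Ls_cover.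
exists K, w; split=> //; exists Q; split=> // g Gg.
have [mu mu_neq0 S_mu] := unimodular_lift_of Gg.
exists mu; split=> //.
have -> : mu *: (Q *m map_mx (fun a : k => a%:A) g *m invmx Q)
          = Q *m (mu *: phi g) *m invmx Q by rewrite scalemxAl scalemxAr.
split; first exact: HQ.
have [_ _ [_ [_ d_mu]]] := S_mu.
by rewrite !det_mulmx det_inv mulrC mulrA mulVf ?mul1r // -unitfE -unitmxE.
Qed.

End GoodReduction.

Lemma potential_good_reduction_of_finite_mod_scalars (R : realType) (k : fieldType)
    (v : k -> R) (G : 'M[k]_2 -> Prop) (Lg : seq 'M[k]_2) :
  nonarch_abs v ->
  (forall g, G g -> g \in unitmx) -> (forall a b, G a -> G b -> G (a *m b)) ->
  (forall g, g \in Lg -> G g) ->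
  (forall g, G g -> exists2 g0, g0 \in Lg & exists2 c, c != 0 & g = c *: g0) ->
  potential_good_reduction v G.
Proof.
move=> Hv G_unit G_mul Lg_G Lg_cover.
have [K [w [Hw w_ext det_sqrt]]] := ext_abs_with_square_roots (map determinant Lg) Hv.
apply: (good_reduction_in_ext G_unit G_mul Lg_G Lg_cover Hw w_ext) => g g_Lg.
by apply: det_sqrt; apply: map_f.
Qed.

Lemma gen_pgl_unit (k : fieldType) (s : seq 'M[k]_2) :
  all (fun g => g \in unitmx) s -> forall g, gen_pgl s g -> g \in unitmx.
Proof.
move=> /allP s_unit g.
elim=> {g} [c c_neq0|g /s_unit //|g /s_unit|a b _ a_unit _ b_unit].
- by rewrite unitmxE det_scalar unitfE expf_neq0.
- by rewrite unitmx_inv.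
- by rewrite unitmx_mul a_unit b_unit.
Qed.

Lemma all_or_exists_not (T : Type) (G P : T -> Prop) :
  (forall g, G g -> P g) \/ exists2 g, G g & ~ P g.
Proof.
have [|none] := classic (exists2 g, G g & ~ P g); first by right.
by left=> g Gg; apply: NNPP => nPg; apply: none; exists g.
Qed.

Unset Implicit Arguments.

Theorem proposition2p14 (R : realType) (k : fieldType) (v : k -> R)
    (Hv : nonarch_abs v) (Hnt : nontrivial_abs v) (Hcomp : complete_abs v)
    (s : seq 'M[k]_2) (Hs : all (fun g => g \in unitmx) s)
    (Hnsi : ~ strongly_irreducible (gen_pgl s)) :
  potential_good_reduction v (gen_pgl s)
  \/ conj_into (@affine_mx k) (gen_pgl s)
  \/ conj_into (@monomial_mx k) (gen_pgl s).
Proof.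
set G := gen_pgl s; have G_unit := gen_pgl_unit Hs.
have G_mul : forall a b, G a -> G b -> G (a *m b) := @gen_pgl_mul k s.
have [x [x_neq0 [ws orbit]]] : has_finite_orbit G by apply: NNPP.
have [fixed|[g1 G1 not_fixed]] :=
  all_or_exists_not G (fun g => proportional (g *m x) x).
  by right; left; apply: conj_affine_of_fixed_point x_neq0 fixed.
have g1x_neq0 : g1 *m x != 0 by apply: unitmx_mul_neq0 => //; apply: G_unit.
have not01 : ~ proportional x (g1 *m x) by move/proportional_sym.
have [pair|[g2 G2 not_pair]] := all_or_exists_not G
  (fun g => proportional (g *m x) x \/ proportional (g *m x) (g1 *m x)).
  right; right; apply: conj_monomial_of_stable_pair x_neq0 g1x_neq0 not01 _.
  exact: stable_pair_of_orbit G_unit G_mul G1 not_fixed pair.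
have not02 : ~ proportional x (g2 *m x).
  by move=> /proportional_sym g2x_x; apply: not_pair; left.
have not12 : ~ proportional (g1 *m x) (g2 *m x).
  by move=> /proportional_sym g2x_g1x; apply: not_pair; right.
have [Lg [Lg_G Lg_cover]] :=
  finite_mod_scalars G_unit G_mul G1 G2 x_neq0 not01 not02 not12 orbit.
left; exact: potential_good_reduction_of_finite_mod_scalars Hv G_unit G_mul Lg_G Lg_cover.
Qed.
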